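(* Let $T>0$ and let $b^k,b\in L^\infty\cap L^1(\mathbb{R}\times(0,T))$ for all $k\in\mathbb{N}$. Assume (i) there is a function $0\le L\in L^{1/2}([0,T])$ such that $|b^k(\cdot,t)|_{\mathrm{Lip}^+}\le L(t)$ for a.e. $t\in(0,T)$ and all $k\in\mathbb{N}$; (ii) $\lim_{k\to\infty}\|b^k-b\|_{L^\infty((0,T);L^1(\mathbb{R}))}=0$. Then for every $R>0$, $\lim_{k\to\infty}\|d_R(b^k;b)\|_{L^1(0,T)}=0$.
   Context: The one-sided Lipschitz constant is $|c|_{\mathrm{Lip}^+}\coloneqq\sup_{x\ne y}\frac{c(x)-c(y)}{x-y}$. For bounded measurable $b:\mathbb{R}\times(0,T)\to\mathbb{R}$, $K_R[b](x,t)\coloneqq\bigcap_{|N|=0}\overline{\mathrm{conv}}\bigl(b(B_R(x)\setminus N,t)\bigr)$, the closed convex hull of the essential range of $b(\cdot,t)$ over $(x-R,x+R)$, and $d_R(b^k;b)(t)\coloneqq\operatorname{ess\,sup}_{x\in\mathbb{R}}\operatorname{dist}\bigl(b^k(x,t),K_R[b](x,t)\bigr)$. *)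

From HB Require Import structures.
From mathcomp Require Import all_boot all_order all_algebra.
From mathcomp Require Import all_classical all_reals all_analysis ess_sup_inf.
Set Implicit Arguments. Unset Strict Implicit. Unset Printing Implicit Defensive.
Import Order.TTheory GRing.Theory Num.Theory.
Import numFieldNormedType.Exports.
Local Open Scope classical_set_scope.
Local Open Scope ring_scope.

Section defs.
Variable R : realType.

Definition cl_conv_hull (A : set R) : set R :=
  \bigcap_(C in [set C : set R | [/\ closed C,
       convex_set (C : set (convex_lmodType R^o)) & A `<=` C]]) C.

Definition K_R (r : R) (b : R -> R -> R) (x t : R) : set R :=
  \bigcap_(N in [set N : set R | measurable N /\ (lebesgue_measure N = 0)%E])
     cl_conv_hull ((fun y => b y t) @` (ball x r `\` N)).

(* distance from a point to a set of reals (extended real, +oo for empty set) *)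
Definition dist_set (y : R) (K : set R) : \bar R :=
  ereal_inf [set (`|y - z|)%:E | z in K].

Definition d_R (r : R) (bk b : R -> R -> R) (t : R) : \bar R :=
  ess_sup lebesgue_measure (fun x => dist_set (bk x t) (K_R r b x t)).

Definition ess_sup_on (D : set R) (f : R -> \bar R) : \bar R :=
  ereal_inf [set y | {ae lebesgue_measure, forall t, D t -> (f t <= y)%E}].

Definition LinfL1_norm (T : R) (f : R -> R -> R) : \bar R :=
  ess_sup_on `]0, T[ (fun t => (\int[lebesgue_measure]_x (`|f x t|)%:E)%E).

Definition lipplus_le (c : R -> R) (L : R) : Prop :=
  forall x y, x != y -> (c x - c y) / (x - y) <= L.

Definition leb2 := ((@lebesgue_measure R) \x (@lebesgue_measure R))%E.

Definition Linf_L1 (T : R) (b : R -> R -> R) : Prop :=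
  let D := [set: R] `*` `]0, T[%classic in
  measurable_fun D (fun p : R * R => b p.1 p.2) /\
  leb2.-integrable D
     (fun p : R * R => (b p.1 p.2)%:E) /\
  exists M : R, {ae leb2,
     forall p : R * R, D p -> (`|b p.1 p.2| <= M)%R}.

End defs.

(* Fix t, write eps for the L^1 distance between b^k(., t) and b(., t), and let
   x be a point.  If b^k(x) exceeds by d > 0 an essential upper bound u of b on
   B_r(x), the one-sided Lipschitz bound L = L(t) keeps b^k above u + d/2 on the
   interval of length a = d r / (2 (L r + d)) to the left of x, which lies in the
   ball; hence eps >= a d / 2, i.e. d^2 r <= 4 eps (L r + d), and so
   d <= 4 eps / r + 2 sqrt (eps L).  Symmetrically on the right of x for essential
   lower bounds.  Since K_r[b](x, t) contains every value between the essential
   infimum and supremum of b on B_r(x), this bounds d_r(b^k; b)(t) by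
   4 eps / r + 2 sqrt (eps L(t)).  Once eps <= s^2 for a.e. t, integrating over
   (0, T) gives ||d_r||_{L^1} <= 4 s^2 T / r + 2 s ||sqrt L||_{L^1}, which is
   small for small s. *)

From HB Require Import structures.
From mathcomp Require Import all_boot all_order all_algebra.
From mathcomp Require Import all_classical all_reals all_analysis ess_sup_inf.
From mathcomp Require Import ring lra measurable_realfun.
Set Implicit Arguments.
Unset Strict Implicit.
Unset Printing Implicit Defensive.
Import Order.TTheory GRing.Theory Num.Theory.
Import numFieldNormedType.Exports.
Local Open Scope classical_set_scope.
Local Open Scope ring_scope.

(* The library's [Hint Extern] for [Filter (almost_everywhere _)] does not fire
   on the Lebesgue measure of a [realType]. *)
#[local] Instance lebesgue_ae_filter (R : realType) :
  Filter (almost_everywhere (@lebesgue_measure R)) := ae_filter_ringOfSetsType _.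

Section lipplus_gap.
Variable R : realType.
Implicit Types (f g h : R -> R).
Local Notation mu := (@lebesgue_measure R).

Lemma lipplus_le_subr f (Lt x y : R) :
  lipplus_le f Lt -> y <= x -> f x - f y <= Lt * (x - y).
Proof.
move=> hf; rewrite le_eqVlt => /predU1P[->|yx]; first by rewrite !subrr mulr0.
by have := hf x y; rewrite (gt_eqF yx) => /(_ isT); rewrite ler_pdivrMr ?subr_gt0.
Qed.

Lemma quadratic_root_le (r Lt eps d : R) : 0 < r -> 0 <= Lt -> 0 <= eps ->
  d ^+ 2 * r <= 4 * eps * (Lt * r + d) -> d <= 4 * eps / r + 2 * Num.sqrt (eps * Lt).
Proof.
move=> r0 L0 e0 hd; set s := 2 * Num.sqrt (eps * Lt).
have s0 : 0 <= s by rewrite mulr_ge0 ?sqrtr_ge0.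
have s2 : s ^+ 2 = 4 * eps * Lt by rewrite exprMn sqr_sqrtr ?mulr_ge0 //; ring.
rewrite -(ler_pM2r r0) mulrDl divfK ?gt_eqF // leNgt; apply/negP => hc.
have d0 : 0 < d by nra.
have : 0 < (d * r - (4 * eps + s * r)) * (d + s) by apply: mulr_gt0; lra.
move: s2 hd; rewrite !expr2; nra.
Qed.

Lemma itv_length_mul_le_integral h (s a c eps : R) :
  measurable_fun setT h -> 0 <= a -> 0 <= c ->
  (\int[mu]_y (`|h y|)%:E <= eps%:E)%E ->
  {ae mu, forall y, `[s, s + a]%classic y -> c <= `|h y|} -> a * c <= eps.
Proof.
move=> mh a0 c0 hint hae.
have mabs : measurable_fun setT (fun y => (`|h y|)%:E).
  by apply/measurable_EFinP; exact: measurableT_comp (@normr_measurable _ _) mh.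
have hcst : (\int[mu]_(y in `[s, (s + a)%R]%classic) c%:E = (a * c)%:E)%E.
  rewrite integral_cst // [X in (_ * X)%E]lebesgue_measure_itv /= lte_fin.
  case: ltP => [_|sa]; last first.
    have -> : a = 0 by lra.
    by rewrite mul0r mule0.
  by rewrite -EFinB -EFinM mulrC addrAC subrr add0r.
rewrite -lee_fin -hcst; apply: le_trans hint.
apply: (@le_trans _ _ (\int[mu]_(y in `[s, (s + a)%R]%classic) (`|h y|)%:E)%E).
  apply: ae_ge0_le_integral => //; first exact: measurable_funS mabs.
exact: ge0_subset_integral.
Qed.

Lemma gap_le_bound h (r Lt eps d : R) :
  0 < r -> 0 <= Lt -> 0 <= eps -> measurable_fun setT h ->
  (\int[mu]_y (`|h y|)%:E <= eps%:E)%E ->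
  (forall a, 0 <= a < r -> Lt * a <= d / 2 ->
     exists s, {ae mu, forall y, `[s, s + a]%classic y -> d / 2 <= `|h y|}) ->
  d <= 4 * eps / r + 2 * Num.sqrt (eps * Lt).
Proof.
move=> r0 L0 e0 mh hint hgap.
have [d0|d0] := leP d 0.
  by apply: le_trans d0 _; rewrite addr_ge0 ?mulr_ge0 ?sqrtr_ge0 ?invr_ge0 ?(ltW r0).
apply: quadratic_root_le => //.
have Lrd : 0 < Lt * r + d by rewrite ltr_wpDl // mulr_ge0 // ltW.
pose a := d * r / (2 * (Lt * r + d)).
have a0 : 0 <= a by rewrite divr_ge0 ?mulr_ge0 // ltW.
have ar : a < r by rewrite ltr_pdivrMr; [nra | lra].
have La : Lt * a <= d / 2 by rewrite mulrA ler_pdivrMr; [nra | lra].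
have [s hs] := hgap a (introT andP (conj a0 ar)) La.
have d2 : 0 <= d / 2 by lra.
have := itv_length_mul_le_integral mh a0 d2 hint hs.
have -> : a * (d / 2) = d ^+ 2 * r / (4 * (Lt * r + d)) by rewrite /a; field; lra.
by rewrite ler_pdivrMr ?mulr_gt0 //; nra.
Qed.

Lemma lipplus_overshoot_le f g (x r Lt eps u : R) :
  0 < r -> 0 <= Lt -> 0 <= eps -> measurable_fun setT f -> measurable_fun setT g ->
  lipplus_le f Lt -> (\int[mu]_y (`|f y - g y|)%:E <= eps%:E)%E ->
  {ae mu, forall y, ball x r y -> g y <= u} ->
  f x - u <= 4 * eps / r + 2 * Num.sqrt (eps * Lt).
Proof.
move=> r0 L0 e0 mf mg hf hint hu.
apply: (gap_le_bound r0 L0 e0 (measurable_funB mf mg) hint) => a /andP[a0 ar] La.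
exists (x - a); apply: filterS hu => y hu; rewrite /= in_itv /= => /andP[ay yx].
have /hu gu : ball x r y by rewrite /ball /= ger0_norm; lra.
have fxy : f x - f y <= Lt * (x - y) by apply: lipplus_le_subr => //; lra.
have Lxy : Lt * (x - y) <= Lt * a by rewrite ler_wpM2l //; lra.
by apply: le_trans (ler_norm _); lra.
Qed.

Lemma lipplus_undershoot_le f g (x r Lt eps v : R) :
  0 < r -> 0 <= Lt -> 0 <= eps -> measurable_fun setT f -> measurable_fun setT g ->
  lipplus_le f Lt -> (\int[mu]_y (`|f y - g y|)%:E <= eps%:E)%E ->
  {ae mu, forall y, ball x r y -> v <= g y} ->
  v - f x <= 4 * eps / r + 2 * Num.sqrt (eps * Lt).
Proof.
move=> r0 L0 e0 mf mg hf hint hv.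
apply: (gap_le_bound r0 L0 e0 (measurable_funB mf mg) hint) => a /andP[a0 ar] La.
exists x; apply: filterS hv => y hv; rewrite /= in_itv /= => /andP[xy ya].
have /hv vg : ball x r y by rewrite /ball /= ler0_norm; lra.
have fyx : f y - f x <= Lt * (y - x) by apply: lipplus_le_subr => //; lra.
have Lyx : Lt * (y - x) <= Lt * a by rewrite ler_wpM2l //; lra.
by rewrite -normrN; apply: le_trans (ler_norm _); lra.
Qed.

End lipplus_gap.

Section ess_hull.
Context d (T : measurableType d) (R : realType) (mu : {measure set T -> \bar R}).
Implicit Types (A : set T) (g : T -> R).

Lemma not_negligible_outside_null A (N : set T) :
  ~ mu.-negligible A -> measurable N -> mu N = 0%E -> exists2 y, A y & ~ N y.
Proof.
move=> nA mN N0; apply: contrapT => hAN; apply: nA; exists N; split => // y Ay.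
by apply: contrapT => Ny; apply: hAN; exists y.
Qed.

(* [w] lies between the essential infimum and the essential supremum of [g] on [A]. *)
Definition in_ess_hull A g (w : R) :=
  forall e, 0 < e -> ~ mu.-negligible (A `&` [set y | w - e <= g y]) /\
                     ~ mu.-negligible (A `&` [set y | g y <= w + e]).

Lemma exists_in_ess_hull A g (u v : R) : u <= v -> ~ mu.-negligible A ->
  ~ mu.-negligible (A `&` [set y | u < g y]) ->
  ~ mu.-negligible (A `&` [set y | g y < v]) ->
  exists2 w, u <= w <= v & in_ess_hull A g w.
Proof.
move=> uv nA nu nv.
pose P w := forall e, 0 < e -> ~ mu.-negligible (A `&` [set y | w - e <= g y]).
pose S := [set w | u <= w <= v /\ P w].
have Su : S u.
  split=> [|e e0 hn]; first by rewrite lexx uv.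
  apply: nu; apply: negligibleS hn => y [Ay uy]; split => //=.
  by apply: le_trans (ltW uy); rewrite gerDl oppr_le0 ltW.
have supS : has_sup S by split; [exists u | exists v => w [/andP[]]].
set w := sup S.
have uw : u <= w by exact: sup_upper_bound.
have wv : w <= v by apply: ge_sup; [exists u | move=> w' [/andP[]]].
have Pw : P w.
  move=> e e0 hn; have [w' [_ Pw'] ww'] := sup_adherent e0 supS.
  apply: (Pw' (w' - (w - e))); first by rewrite subr_gt0.
  by apply: negligibleS hn => y [Ay /= hy]; split => //; lra.
exists w; first by rewrite uw wv.
move=> e e0; split=> [|hn]; first exact: Pw.
have [ve|ve] := leP v (w + e).
  apply: nv; apply: negligibleS hn => y [Ay /= hy]; split => //.
  exact: le_trans (ltW hy) ve.
have /existsNP[e' /not_implyP[e'0 /contrapT hn']] : ~ P (w + e / 2).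
  move=> Pw2; suff : w + e / 2 <= w by lra.
  by apply: sup_upper_bound => //; split => //; apply/andP; lra.
apply: nA; apply: negligibleS (negligibleU hn hn') => y Ay.
have [gy|gy] := leP (g y) (w + e); [left | right]; split => //=.
by apply: ltW; apply: le_lt_trans gy; lra.
Qed.

End ess_hull.

Section d_R_estimate.
Variable R : realType.
Local Notation mu := (@lebesgue_measure R).

Lemma ball_not_negligible (x r : R) : 0 < r -> ~ mu.-negligible (ball x r).
Proof.
move=> r0 /(negligibleP mu (measurable_ball x r)).
rewrite [X in X = _ -> _]lebesgue_measure_ball ?ltW // => /eqP.
by rewrite eqe mulrn_eq0 /= gt_eqF.
Qed.

Lemma in_ess_hull_K_R (b : R -> R -> R) (x r t w : R) :
  in_ess_hull mu (ball x r) (fun y => b y t) w -> K_R r b x t w.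
Proof.
move=> hw N [mN N0] C [Ccl Ccv Csub].
apply: Ccl => B /nbhs_ballP[e /= e0 eB].
have [|nlo nhi] := hw (e / 2); first lra.
have [y1 [b1 /= hy1] Ny1] := not_negligible_outside_null nlo mN N0.
have [y2 [b2 /= hy2] Ny2] := not_negligible_outside_null nhi mN N0.
have C1 : C (b y1 t) by apply: Csub; exists y1.
have C2 : C (b y2 t) by apply: Csub; exists y2.
have inB z : `|w - z| < e -> B z by exact: eB.
have [lo2|lo2] := leP (w - e / 2) (b y2 t).
  by exists (b y2 t); split => //; apply: inB; rewrite ltr_norml; lra.
have [hi1|hi1] := leP (b y1 t) (w + e / 2).
  by exists (b y1 t); split => //; apply: inB; rewrite ltr_norml; lra.
(* otherwise [b y2 t < w < b y1 t] and [w] is a convex combination of the two *)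
exists w; split; last by apply: inB; rewrite subrr normr0.
have l0 : 0 <= (b y1 t - w) / (b y1 t - b y2 t) by rewrite divr_ge0 //; lra.
have l1 : (b y1 t - w) / (b y1 t - b y2 t) <= 1 by rewrite ler_pdivrMr; lra.
have := Ccv (b y2 t) (b y1 t) (Itv01 l0 l1) (mem_set C2) (mem_set C1).
rewrite inE; congr C.
rewrite /conv /= /unstable.onem -!/(GRing.scale _ _) /GRing.scale /=.
have y2_lt_y1 : b y2 t < b y1 t by lra.
(* [field] chokes on the extended-real hypotheses in the context. *)
by clear -y2_lt_y1; field; lra.
Qed.

Lemma dist_K_R_le (b : R -> R -> R) (x r t c be : R) : 0 < r -> 0 <= be ->
  (forall u, {ae mu, forall y, ball x r y -> b y t <= u} -> c - u <= be) ->
  (forall v, {ae mu, forall y, ball x r y -> v <= b y t} -> v - c <= be) ->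
  (dist_set c (K_R r b x t) <= be%:E)%E.
Proof.
move=> r0 be0 hu hv; apply/lee_addgt0Pr => e e0.
have nu : ~ mu.-negligible (ball x r `&` [set y | c - be - e < b y t]).
  move=> hn; suff : c - (c - be - e) <= be by lra.
  by apply: hu; apply: negligibleS hn => y /= /not_implyP[? /negP]; rewrite -ltNge.
have nv : ~ mu.-negligible (ball x r `&` [set y | b y t < c + be + e]).
  move=> hn; suff : c + be + e - c <= be by lra.
  by apply: hv; apply: negligibleS hn => y /= /not_implyP[? /negP]; rewrite -ltNge.
have [|w /andP[lo hi] hw] := exists_in_ess_hull _ (ball_not_negligible r0) nu nv.
  lra.
apply: ge_ereal_inf; exists (`|c - w|)%:E.
  by exists w => //; exact: in_ess_hull_K_R.
by rewrite -EFinD lee_fin ler_norml; lra.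
Qed.

Lemma dist_set_ge0 (c : R) (K : set R) : (0 <= dist_set c K)%E.
Proof. by apply/ereal_infP => _ [z _ <-]; rewrite lee_fin. Qed.

Lemma d_R_ge0 (r : R) (bk b : R -> R -> R) (t : R) : (0 <= d_R r bk b t)%E.
Proof.
apply: ess_sup_gee; last by apply: nearW => x; exact: dist_set_ge0.
by rewrite -set_itvNyy [X in (_ < X)%E]lebesgue_measure_itv /= addye.
Qed.

Lemma d_R_le (bk b : R -> R -> R) (t r Lt eps : R) :
  0 < r -> 0 <= Lt -> 0 <= eps ->
  measurable_fun setT (fun y => bk y t) -> measurable_fun setT (fun y => b y t) ->
  lipplus_le (fun y => bk y t) Lt ->
  (\int[mu]_y (`|bk y t - b y t|)%:E <= eps%:E)%E ->
  (d_R r bk b t <= (4 * eps / r + 2 * Num.sqrt (eps * Lt))%:E)%E.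
Proof.
move=> r0 L0 e0 mf mg hf hint; apply/ess_supP; apply: nearW => x.
apply: dist_K_R_le => // [|u|v].
- by rewrite addr_ge0 ?mulr_ge0 ?sqrtr_ge0 ?invr_ge0 ?(ltW r0).
- exact: lipplus_overshoot_le r0 L0 e0 mf mg hf hint.
- exact: lipplus_undershoot_le r0 L0 e0 mf mg hf hint.
Qed.

End d_R_estimate.

Section integral_nonmeasurable.
Context d (T : measurableType d) (R : realType) (mu : {measure set T -> \bar R}).
Local Open Scope ereal_scope.
Import HBNNSimple.

Lemma ae_ge0_le_integral_nonmeasurable (D : set T) (f g : T -> \bar R) :
  measurable D -> (forall x, D x -> 0 <= f x) -> (forall x, D x -> 0 <= g x) ->
  measurable_fun D g -> {ae mu, forall x, D x -> f x <= g x} ->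
  \int[mu]_(x in D) f x <= \int[mu]_(x in D) g x.
Proof.
move=> mD f0 g0 mg fg.
rewrite ge0_integralE //; apply: ge_ereal_sup => _ [h hf <-].
rewrite -integralT_nnsfun [leRHS]integral_mkcond.
apply: ae_ge0_le_integral => //.
- by move=> x _; rewrite lee_fin; exact: fun_ge0.
- by apply: measurableT_comp => //; exact: measurable_funP.
- by move=> x _; rewrite /patch; case: ifPn => // /set_mem; exact: g0.
- exact/(measurable_restrictT _ _).1.
apply: filterS fg => x fg _; have := hf x; rewrite /patch.
by case: ifPn => [/set_mem Dx hx|_ //]; exact: le_trans hx (fg Dx).
Qed.

End integral_nonmeasurable.

Lemma ge0_cvge0 (R : realType) (I : Type) (F : set_system I) {FF : Filter F}
    (f : I -> \bar R) :
  (forall i, 0 <= f i)%E -> (forall e, 0 < e -> \forall i \near F, (f i <= e%:E)%E) ->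
  f @ F --> 0%E.
Proof.
move=> f0 fe; have fin_le e i : (f i <= e%:E)%E -> f i \is a fin_num.
  by move=> fi; rewrite ge0_fin_numE // (le_lt_trans fi) ?ltry.
apply/fine_cvgP; split; first exact: filterS (@fin_le 1) (fe 1 ltr01).
apply/cvgr0Pnorm_le => e e0; apply: filterS (fe e e0) => i fi /=.
by rewrite ger0_norm ?fine_ge0 // -lee_fin fineK // (fin_le e).
Qed.

Lemma cvge0_lt_near (R : realType) (I : Type) (F : set_system I) {FF : Filter F}
    (f : I -> \bar R) (e : R) :
  f @ F --> 0%E -> 0 < e -> \forall i \near F, (f i < e%:E)%E.
Proof.
move=> /(fine_cvgP _ _).1[fin cv] e0.
by apply: filterS2 fin (cvgr_lt _ cv _ e0) => i fini; rewrite -(fineK fini) lte_fin.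
Qed.

Section integral_d_R.
Variable R : realType.
Local Notation mu := (@lebesgue_measure R).

Lemma Linf_L1_measurable_section (T t : R) (f : R -> R -> R) :
  Linf_L1 T f -> `]0%R, T[%classic t -> measurable_fun setT (fun y => f y t).
Proof.
move=> [mf _] Tt; apply: (measurable_comp _ _ mf (pair2_measurable t)).
- by apply: measurableX => //; exact: measurable_itv.
- by move=> _ [y _ <-].
Qed.

Lemma ess_sup_on_lt_ae_le (D : set R) (f : R -> \bar R) (y : R) :
  (ess_sup_on D f < y%:E)%E -> {ae mu, forall t, D t -> (f t <= y%:E)%E}.
Proof.
move=> /ereal_inf_lt[z fz zy].
by apply: filterS fz => t fzt /fzt /le_trans; apply; exact: ltW.
Qed.

Lemma measurable_sqrt_EFin (D : set R) (L : R -> R) : measurable_fun D L ->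
  measurable_fun D (fun t => (Num.sqrt (L t))%:E).
Proof.
move=> mL; apply/measurable_EFinP; apply: (measurableT_comp _ mL).
by apply: continuous_measurable_fun; exact: sqrt_continuous.
Qed.

Lemma integral_d_R_le (T r eps I : R) (bk b : R -> R -> R) (L : R -> R) :
  0 < T -> 0 < r -> 0 <= eps -> Linf_L1 T bk -> Linf_L1 T b ->
  (forall t, 0 <= L t) -> measurable_fun `]0%R, T[%classic L ->
  (\int[mu]_(t in `]0%R, T[%classic) (Num.sqrt (L t))%:E <= I%:E)%E ->
  {ae mu, forall t, `]0%R, T[%classic t -> lipplus_le (fun x => bk x t) (L t)} ->
  {ae mu, forall t, `]0%R, T[%classic t ->
     (\int[mu]_x (`|bk x t - b x t|)%:E <= eps%:E)%E} ->
  (\int[mu]_(t in `]0%R, T[%classic) `|d_R r bk b t| <=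
     (4 * eps / r * T + 2 * Num.sqrt eps * I)%:E)%E.
Proof.
move=> T0 r0 e0 bkL bL L0 mL sqrtL_I lip close.
have c0 : 0 <= 4 * eps / r by rewrite divr_ge0 ?mulr_ge0 ?(ltW r0).
have k0 : 0 <= 2 * Num.sqrt eps by rewrite mulr_ge0 ?sqrtr_ge0.
have msqrtL := measurable_sqrt_EFin mL.
have sqrtL0 t : `]0%R, T[%classic t -> (0 <= (Num.sqrt (L t))%:E)%E.
  by rewrite lee_fin sqrtr_ge0.
apply: (@le_trans _ _ ((4 * eps / r * T)%:E + (2 * Num.sqrt eps)%:E *
    \int[mu]_(t in `]0%R, T[%classic) (Num.sqrt (L t))%:E)%E); last first.
  by rewrite EFinD leeD2l // (EFinM _ I); apply: lee_wpmul2l; rewrite ?lee_fin.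
have -> : ((4 * eps / r * T)%:E = \int[mu]_(t in `]0%R, T[%classic) (4 * eps / r)%:E)%E.
  rewrite integral_cst // [X in (_ * X)%E]lebesgue_measure_itv /= lte_fin T0.
  by rewrite -EFinM subr0.
rewrite -ge0_integralZl_EFin // -ge0_integralD //; last exact: emeasurable_funM.
apply: ae_ge0_le_integral_nonmeasurable => //.
- by move=> t /sqrtL0 ?; rewrite adde_ge0 ?mule_ge0 ?lee_fin.
- by apply: emeasurable_funD => //; exact: emeasurable_funM.
apply: filterS2 lip close => t lipt closet Tt.
rewrite gee0_abs ?d_R_ge0 // -EFinM -EFinD.
apply: le_trans (d_R_le r0 (L0 t) e0 (Linf_L1_measurable_section bkL Tt)
  (Linf_L1_measurable_section bL Tt) (lipt Tt) (closet Tt)) _.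
by rewrite lee_fin sqrtrM // mulrA.
Qed.

End integral_d_R.

Lemma exists_small_quadratic (R : realType) (a c e : R) :
  0 <= a -> 0 <= c -> 0 < e -> exists2 s, 0 < s & s ^+ 2 * a + s * c <= e.
Proof.
move=> a0 c0 e0; pose s := Num.min 1 (e / (a + c + 1)).
have C0 : 0 < a + c + 1 by lra.
have s0 : 0 < s by rewrite lt_min ltr01 divr_gt0.
have s1 : s <= 1 by rewrite ge_min lexx.
have sC : s * (a + c + 1) <= e by rewrite -ler_pdivlMr // ge_min lexx orbT.
by exists s => //; have := mulr_ge0 (ltW s0) a0; nra.
Qed.

Theorem lemma5p1 (R : realType) (T : R) (bk : nat -> R -> R -> R) (b : R -> R -> R)
  (L : R -> R) :
  0 < T ->
  (forall k, Linf_L1 T (bk k)) -> Linf_L1 T b ->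
  (* (i) 0 <= L in L^{1/2}([0,T]) and |bk(.,t)|_{Lip+} <= L(t) a.e. *)
  (forall t, 0 <= L t) ->
  measurable_fun `[0%R, T]%classic L ->
  (\int[lebesgue_measure]_(t in `[0%R, T]%classic) (Num.sqrt (L t))%:E < +oo)%E ->
  (forall k, {ae lebesgue_measure, forall t, `]0%R, T[%classic t ->
      lipplus_le (fun x => bk k x t) (L t)}) ->
  (* (ii) *)
  LinfL1_norm T (fun x t => bk k x t - b x t) @[k --> \oo] --> 0%E ->
  forall r : R, 0 < r ->
    (\int[lebesgue_measure]_(t in `]0%R, T[%classic) `|d_R r (bk k) b t|)%E @[k --> \oo] --> 0%E.
Proof.
move=> T0 bkL bL L0 mL sqrtL_fin lip conv r r0.
have sub0T : `]0%R, T[%classic `<=` `[0%R, T]%classic by apply: subset_itvW.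
have mL' := measurable_funS (measurable_itv _) sub0T mL.
set I := fine (\int[lebesgue_measure]_(t in `[0%R, T]%classic) (Num.sqrt (L t))%:E)%E.
have sqrtL0 :
    (0 <= \int[lebesgue_measure]_(t in `[0%R, T]%classic) (Num.sqrt (L t))%:E)%E.
  by apply: integral_ge0 => t _; rewrite lee_fin sqrtr_ge0.
have I0 : 0 <= I by exact: fine_ge0.
have sqrtL_I :
    (\int[lebesgue_measure]_(t in `]0%R, T[%classic) (Num.sqrt (L t))%:E <= I%:E)%E.
  rewrite fineK ?ge0_fin_numE //.
  by apply: ge0_subset_integral => //; exact: measurable_sqrt_EFin.
apply: ge0_cvge0 => [k|e e0]; first by apply: integral_ge0 => t _; exact: abse_ge0.
have A0 : 0 <= 4 * T / r by rewrite divr_ge0 ?mulr_ge0 ?(ltW T0) ?(ltW r0).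
have [s s0 se] := exists_small_quadratic A0 (mulr_ge0 (ler0n _ 2) I0) e0.
have s20 : 0 < s ^+ 2 by rewrite exprn_gt0.
apply: filterS (cvge0_lt_near conv s20) => k /ess_sup_on_lt_ae_le close.
apply: le_trans (integral_d_R_le T0 r0 (sqr_ge0 s) (bkL k) bL L0 mL' sqrtL_I
  (lip k) close) _.
rewrite lee_fin sqrtr_sqr ger0_norm ?(ltW s0) //.
have -> : 4 * s ^+ 2 / r * T = s ^+ 2 * (4 * T / r) by field; rewrite gt_eqF.
lra.
Qed.
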